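(* Let $G$ be a well-bicovered graph and let $e$ be an edge of $G$ incident with a vertex $y$ of degree $2$. Then the graph $G'$ obtained from $G$ by replacing the edge $e$ by a path of length three (i.e., subdividing $e$ with two new vertices) is well-bicovered.
   Context: All graphs are finite and simple; ''subgraph'' means induced subgraph. A graph is well-bicovered if every vertex-inclusion-maximal induced bipartite subgraph has the same order. *)

From mathcomp Require Import all_boot.
Set Implicit Arguments. Unset Strict Implicit. Unset Printing Implicit Defensive.

Definition simple_graph (T : finType) (g : rel T) : Prop :=
  symmetric g /\ irreflexive g.

Definition bipartite_set (T : finType) (g : rel T) (S : {set T}) : Prop :=
  exists c : T -> bool,
    forall u v, u \in S -> v \in S -> g u v -> c u != c v.

Definition maximal_bipartite_set (T : finType) (g : rel T) (S : {set T}) : Prop :=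
  bipartite_set g S /\
  forall S' : {set T}, S \subset S' -> bipartite_set g S' -> S' = S.

Definition well_bicovered (T : finType) (g : rel T) : Prop :=
  forall S1 S2 : {set T}, maximal_bipartite_set g S1 -> maximal_bipartite_set g S2 ->
    #|S1| = #|S2|.

(* Graph obtained from g by replacing edge {x,y} by the path x - a - b - y,
   with new vertices a = inr false, b = inr true. *)
Definition subdiv3 (T : finType) (g : rel T) (x y : T) : rel (T + bool)%type :=
  fun u v =>
    match u, v with
    | inl u', inl v' => g u' v' && ~~ (((u' == x) && (v' == y)) || ((u' == y) && (v' == x)))
    | inl u', inr b | inr b, inl u' => ((u' == x) && ~~ b) || ((u' == y) && b)
    | inr b1, inr b2 => b1 != b2
    end.

From mathcomp Require Import all_boot.
Set Implicit Arguments. Unset Strict Implicit. Unset Printing Implicit Defensive.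

(* Write a = inr false and b = inr true for the new vertices of the path
   x - a - b - y.  A maximal bipartite set S' of the subdivided graph contains
   a or b, since a vertex with at most one neighbour in S' can always be added.
   If it contains both, its old part is maximal bipartite in G: the path forces
   x and y to get different colours, exactly as the edge xy did.  If it contains
   only one, its old part S is not bipartite in G (otherwise both a and b could
   be added), hence contains x and y, and S minus y is maximal bipartite in G:
   since deg y = 2, a vertex v that could be added to it could be added to S'
   as well, y having at most one neighbour besides b.  In both cases
   |S'| = |M| + 2 for a maximal bipartite set M of G. *)

Section BipartiteSets.

Variables (T : finType) (g : rel T).

Lemma bipartite_setS (A B : {set T}) :
  B \subset A -> bipartite_set g A -> bipartite_set g B.
Proof.
by move=> /subsetP sBA [c Hc]; exists c => u v uB vB; apply: Hc; apply: sBA.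
Qed.

Hypotheses (g_sym : symmetric g) (g_irr : irreflexive g).

Lemma bipartite_setU1 (S : {set T}) (v u0 : T) :
  bipartite_set g S -> (forall u, u \in S -> g v u -> u = u0) ->
  bipartite_set g (v |: S).
Proof.
move=> [c Hc] nbr_v.
exists (fun z => if z == v then ~~ c u0 else c z) => p q; rewrite !in_setU1.
case: (eqVneq p v) => [->|pv]; case: (eqVneq q v) => [->|qv] /=.
- by rewrite g_irr.
- by move=> _ qS /(nbr_v q qS) ->; case: (c u0).
- by move=> pS _; rewrite g_sym => /(nbr_v p pS) ->; case: (c u0).
- exact: Hc.
Qed.

End BipartiteSets.

Lemma maximal_bipartite_setP (T : finType) (g : rel T) (S : {set T}) :
  maximal_bipartite_set g S <->
  bipartite_set g S /\ (forall v, v \notin S -> ~ bipartite_set g (v |: S)).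
Proof.
split=> [[bS maxS] | [bS addS]].
  split=> // v vS /(maxS _ (subsetUr _ _)) E.
  by move: vS; rewrite -E setU11.
split=> // S' sSS' bS'; apply/eqP; rewrite eqEsubset sSS' andbT.
apply/subsetP => v vS'; apply/negPn/negP => vS; apply: (addS v vS).
by apply: bipartite_setS bS'; rewrite subUset sub1set vS' sSS'.
Qed.

Section Subdivision.

Variables (T : finType) (g : rel T) (x y : T).
Hypotheses (g_sym : symmetric g) (g_irr : irreflexive g) (gxy : g x y).

Local Notation G' := (subdiv3 g x y).

Definition subdiv3_lift (S : {set T}) : {set T + bool} :=
  [set z | if z is inl t then t \in S else true].

Lemma subdiv3_sym : symmetric G'.
Proof.
move=> [u|c] [v|d] //=; last by rewrite eq_sym.
by rewrite g_sym orbC [(v == x) && _]andbC [(v == y) && _]andbC.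
Qed.

Lemma subdiv3_irr : irreflexive G'.
Proof. by move=> [u|c] /=; rewrite ?g_irr ?eqxx. Qed.

Lemma card_subdiv3_set (S' : {set T + bool}) :
  #|S'| = #|inl @^-1: S'| + (inr false \in S') + (inr true \in S').
Proof.
rewrite -!sum1_card big_sumType /= -addnA; congr (_ + _).
  by apply: eq_bigl => t; rewrite inE.
by rewrite big_mkcond big_bool /=; case: (inr true \in S'); case: (inr false \in S').
Qed.

Lemma bipartite_subdiv3_lift (S : {set T}) :
  bipartite_set g S -> bipartite_set G' (subdiv3_lift S).
Proof.
move=> [c Hc].
have cxy : x \in S -> y \in S -> c x != c y by move=> xS yS; exact: Hc xS yS gxy.
(* a gets colour ca, against x if x is present and like y otherwise; b the opposite *)
pose ca := if x \in S then ~~ c x else c y.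
exists (fun z => match z with inl t => c t | inr d => d (+) ca end).
have path_ok t d : t \in S -> G' (inl t) (inr d) -> c t != d (+) ca.
  move=> tS /=; case: d => /=; rewrite ?andbT ?andbF ?orbF => /eqP tE; subst t.
    by rewrite /ca; case: ifP => [xS|_]; [have := cxy xS tS | ]; case: (c x); case: (c y).
  by rewrite /ca tS; case: (c x).
move=> [u|d] [v|e]; rewrite !inE.
- by move=> uS vS /andP[guv _]; apply: Hc.
- by move=> uS _; apply: path_ok.
- by move=> _ vS; rewrite subdiv3_sym eq_sym; apply: path_ok.
- by move=> _ _ /=; rewrite (inj_eq (@addIb ca)).
Qed.

Lemma bipartite_subdiv3_restr (S' : {set T + bool}) (M : {set T}) :
  bipartite_set G' S' -> M \subset inl @^-1: S' -> ~~ ((x \in M) && (y \in M)) ->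
  bipartite_set g M.
Proof.
move=> [c Hc] /subsetP sMS' nxy; exists (fun t => c (inl t)) => u v uM vM guv.
have := sMS' u uM; have := sMS' v vM; rewrite !inE => vS' uS'.
apply: Hc => //=; rewrite guv /=.
by apply/negP => /orP[] /andP[/eqP eu /eqP ev]; move: nxy; rewrite -eu -ev uM vM.
Qed.

Lemma bipartite_subdiv3_trace (S' : {set T + bool}) :
  bipartite_set G' S' -> inr false \in S' -> inr true \in S' ->
  bipartite_set g (inl @^-1: S').
Proof.
move=> [c Hc] aS' bS'; exists (fun t => c (inl t)) => u v; rewrite !inE => uS' vS' guv.
have path_xy : inl x \in S' -> inl y \in S' -> c (inl x) != c (inl y).
  move=> xS' yS'.
  have xa : c (inl x) != c (inr false) by apply: Hc => //=; rewrite eqxx.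
  have ab : c (inr false) != c (inr true) by apply: Hc.
  have i_y : c (inr true) != c (inl y) by apply: Hc => //=; rewrite eqxx orbT.
  by move: xa ab i_y; case: (c _); case: (c _); case: (c _); case: (c _).
case: (boolP (((u == x) && (v == y)) || ((u == y) && (v == x)))) => [|not_xy].
  case/orP => /andP[/eqP eu /eqP ev]; subst u v; first exact: path_xy.
  by rewrite eq_sym; apply: path_xy.
by apply: Hc => //=; rewrite guv not_xy.
Qed.

Lemma maximal_subdiv3_new_vertex (S' : {set T + bool}) :
  maximal_bipartite_set G' S' -> (inr false \in S') || (inr true \in S').
Proof.
move=> /maximal_bipartite_setP [bipS' addS'].
apply/negPn/negP; rewrite negb_or => /andP[aS' bS']; apply: (addS' _ aS').
apply: (bipartite_setU1 (u0 := inl x) subdiv3_sym subdiv3_irr bipS') => -[t|d] /=.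
  by rewrite andbT andbF orbF => _ /eqP ->.
by case: d; rewrite // (negbTE bS').
Qed.

Lemma maximal_subdiv3_trace (S' : {set T + bool}) :
  maximal_bipartite_set G' S' -> inr false \in S' -> inr true \in S' ->
  maximal_bipartite_set g (inl @^-1: S').
Proof.
move=> mS' aS' bS'; have [bipS' addS'] := (maximal_bipartite_setP G' S').1 mS'.
apply/maximal_bipartite_setP; split; first exact: bipartite_subdiv3_trace bipS' aS' bS'.
move=> v; rewrite inE => vS' /bipartite_subdiv3_lift bv; apply: (addS' _ vS').
by apply: bipartite_setS bv; apply/subsetP => -[t|d]; rewrite !inE.
Qed.

Lemma subdiv3_trace_not_bipartite (S' : {set T + bool}) :
  maximal_bipartite_set G' S' -> ~~ ((inr false \in S') && (inr true \in S')) ->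
  ~ bipartite_set g (inl @^-1: S').
Proof.
move=> [_ maxS'] not_ab /bipartite_subdiv3_lift /maxS' E.
by move: not_ab; rewrite -E ?inE //; apply/subsetP => -[t|d]; rewrite !inE.
Qed.

Lemma subdiv3_trace_end (S' : {set T + bool}) :
  maximal_bipartite_set G' S' -> ~~ ((inr false \in S') && (inr true \in S')) ->
  y \in inl @^-1: S'.
Proof.
move=> mS' not_ab; apply/negPn/negP => yS.
apply: (subdiv3_trace_not_bipartite mS' not_ab).
by apply: (bipartite_subdiv3_restr mS'.1 (subxx _)); rewrite (negbTE yS) andbF.
Qed.

Variable w : T.
Hypothesis y_nbr : forall u, g y u -> u != x -> u = w.

Lemma maximal_subdiv3_trace_del (S' : {set T + bool}) :
  maximal_bipartite_set G' S' -> ~~ ((inr false \in S') && (inr true \in S')) ->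
  maximal_bipartite_set g (inl @^-1: S' :\ y).
Proof.
move=> mS' not_ab; have [bipS' addS'] := (maximal_bipartite_setP G' S').1 mS'.
have yS := subdiv3_trace_end mS' not_ab.
have yx : y != x by apply: contraTneq gxy => ->; rewrite g_irr.
apply/maximal_bipartite_setP; split.
  by apply: bipartite_subdiv3_restr bipS' (subsetDl _ _) _; rewrite !inE eqxx andbF.
move=> v; rewrite !inE negb_and negbK => /orP[/eqP-> | vS'] bv.
  by apply: (subdiv3_trace_not_bipartite mS' not_ab); rewrite -(setD1K yS).
apply: addS' vS' _.
(* In G', y is adjacent only to w and b, and b only to a and y:
   add them back one at a time. *)
set B := (inl v |: S') :\ inl y :\ inr true.
have bB : bipartite_set G' B.
  apply: bipartite_setS (bipartite_subdiv3_lift bv).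
  apply/subsetP => -[t|d]; rewrite !inE //=.
  case/andP=> ty /orP[/eqP[->]|->]; rewrite ?eqxx // andbT.
  by apply/orP; right; apply: contraNneq ty => ->.
have byB : bipartite_set G' (inl y |: B).
  apply: (bipartite_setU1 (u0 := inl w) subdiv3_sym subdiv3_irr bB).
  move=> [t|[]]; rewrite !inE //=.
    by rewrite (negbTE yx) eqxx /= => _ /andP[gyt /(y_nbr gyt) ->].
  by rewrite (negbTE yx) andbF.
have [aS' | aS'] := boolP (inr false \in S').
  have bS' : inr true \notin S' by move: not_ab; rewrite aS'.
  apply: bipartite_setS byB; apply/subsetP => z; rewrite !inE => zS.
  case: eqVneq => //= _; rewrite zS andbT.
  by apply: contraNneq bS' => zb; move: zS; rewrite zb.
apply: bipartite_setS
  (bipartite_setU1 (v := inr true) (u0 := inl y) subdiv3_sym subdiv3_irr byB _).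
  apply/subsetP => z; rewrite !inE => ->.
  by case: (z == inr true); case: (z == inl y).
move=> [t|[]]; rewrite !inE //=; last by rewrite (negbTE aS').
by rewrite andbF andbT => _ /eqP ->.
Qed.

Lemma maximal_subdiv3_card (S' : {set T + bool}) :
  maximal_bipartite_set G' S' ->
  exists2 M, maximal_bipartite_set g M & #|S'| = #|M| + 2.
Proof.
move=> mS'; rewrite card_subdiv3_set.
have := maximal_subdiv3_new_vertex mS'.
have [/andP[aS' bS'] _ | not_ab a_or_b] :=
  boolP ((inr false \in S') && (inr true \in S')).
  exists (inl @^-1: S'); first exact: maximal_subdiv3_trace mS' aS' bS'.
  by rewrite aS' bS' -addnA.
exists (inl @^-1: S' :\ y); first exact: maximal_subdiv3_trace_del mS' not_ab.
rewrite (cardsD1 y) (subdiv3_trace_end mS' not_ab).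
move: a_or_b not_ab.
by case: (_ \in S'); case: (_ \in S') => //= _ _; rewrite addn0 add1n addn1 addn2.
Qed.

End Subdivision.

Theorem mainTheorem12 (T : finType) (g : rel T) (x y : T) :
  simple_graph g ->
  well_bicovered g ->
  g x y ->
  #|[set z | g y z]| = 2 ->
  well_bicovered (subdiv3 g x y).
Proof.
move=> [g_sym g_irr] wb gxy deg_y.
have [w y_nbr] : exists w, forall u, g y u -> u != x -> u = w.
  have /cards1P[w Ew] : #|[set z | g y z] :\ x| == 1.
    by move: deg_y; rewrite (cardsD1 x) inE g_sym gxy add1n => -[->].
  by exists w => u gyu ux; apply/set1P; rewrite -Ew !inE ux gyu.
move=> S1 S2.
move=> /(maximal_subdiv3_card g_sym g_irr gxy y_nbr) [M1 mM1 ->].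
move=> /(maximal_subdiv3_card g_sym g_irr gxy y_nbr) [M2 mM2 ->].
by rewrite (wb _ _ mM1 mM2).
Qed.
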